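(* Let $m,n\ge 2$, let $W'$ be a channel from $\{1,\dots,m\}$ to $\{1,2\}$, and let $W''$ be a channel from $\{1,2\}$ to $\{1,\dots,n\}$ with $W''_{1,*}\ne W''_{2,*}$; set $W=W'W''$. Let $\mathcal{S}$ be a finite set, $p_S$ a probability distribution on $\mathcal{S}$, and $K^{(s)}$ ($s\in\mathcal{S}$) channels from $\{1,\dots,m\}$ to $\{1,2\}$ such that $W'=\sum_{s\in\mathcal{S}}p_S(s)K^{(s)}$. Define the channel $V$ from the set $\{1,\dots,m\}^{\mathcal{S}}$ of maps $u:\mathcal{S}\to\{1,\dots,m\}$ to $\{1,\dots,n\}$ by $V_{u,*}=\big(\sum_{s}p_S(s)K^{(s)}_{u(s),*}\big)W''$, so that $C(V)$ is the capacity of the state-dependent channel $x,s\mapsto (K^{(s)}W'')_{x,*}$ with the state $S\sim p_S$ available causally at the encoder. Then $C(V)=C(W)$ (the causal state information at the encoder does not increase the capacity) if and only if there exist $i_1,i_2\in\{1,\dots,m\}$ such that every $K^{(s)}$ with $p_S(s)>0$ is $(i_1,i_2)$-ended.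
   Context: A channel from a finite set $A$ to a finite set $B$ is a row-stochastic matrix; $W_{x,*}$ denotes row $x$. For a probability distribution $\mu$ on the input set, $I(\mu,W)=\sum_x\mu_x D(W_{x,*}\|\mu W)$ (Kullback–Leibler divergence) and $C(W)=\max_\mu I(\mu,W)$. A channel $K$ from $\{1,\dots,m\}$ to $\{1,2\}$ is called $(i_1,i_2)$-ended if $K_{i_1,1}=\min_i K_{i,1}$ and $K_{i_2,1}=\max_i K_{i,1}$ (equivalently, all rows of $K$ lie on the segment from $K_{i_1,*}$ to $K_{i_2,*}$). *)

From HB Require Import structures.
From mathcomp Require Import all_boot all_order all_algebra.
From mathcomp Require Import all_classical all_reals all_analysis.
Set Implicit Arguments. Unset Strict Implicit. Unset Printing Implicit Defensive.
Import Order.TTheory GRing.Theory Num.Theory.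
Local Open Scope ring_scope.
Local Open Scope classical_set_scope.

Section Channels.
Variable R : realType.

Definition is_dist (A : finType) (mu : A -> R) : Prop :=
  (forall x, 0 <= mu x) /\ \sum_(x : A) mu x = 1.

Definition is_channel (A B : finType) (W : A -> B -> R) : Prop :=
  forall x, is_dist (W x).

Definition chan_comp (A B C : finType) (W1 : A -> B -> R) (W2 : B -> C -> R)
  : A -> C -> R := fun x z => \sum_(y : B) W1 x y * W2 y z.

Definition out_dist (A B : finType) (mu : A -> R) (W : A -> B -> R) : B -> R :=
  fun y => \sum_(x : A) mu x * W x y.

(* Kullback-Leibler divergence (natural log); used only where supp P is
   contained in supp Q, where this formula is exact (0 ln 0 = 0 since ln 0 = 0) *)
Definition KL (B : finType) (P Q : B -> R) : R :=
  \sum_(y : B) P y * ln (P y / Q y).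

Definition mutinf (A B : finType) (mu : A -> R) (W : A -> B -> R) : R :=
  \sum_(x : A) mu x * KL (W x) (out_dist mu W).

Definition capacity (A B : finType) (W : A -> B -> R) : R :=
  sup [set mutinf mu W | mu in [set mu : A -> R | is_dist mu]].

(* (i1,i2)-ended channel from 'I_m to 'I_2 (output "1" is ord0) *)
Definition ended (m : nat) (K : 'I_m -> 'I_2 -> R) (i1 i2 : 'I_m) : Prop :=
  (forall i, K i1 ord0 <= K i ord0) /\ (forall i, K i ord0 <= K i2 ord0).

End Channels.

From HB Require Import structures.
From mathcomp Require Import all_boot all_order all_algebra.
From mathcomp Require Import all_classical all_reals all_analysis.
From mathcomp Require Import ring lra.
Set Implicit Arguments. Unset Strict Implicit. Unset Printing Implicit Defensive.
Import Order.TTheory GRing.Theory Num.Theory.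
Local Open Scope ring_scope.

(* The rows of W'W'' and of V all lie on the segment between the two rows
   a, b of W'': row x is mix (t x) a b with t x = W'(x, 1).  By convexity of
   relative entropy, the capacity of such a channel equals the capacity of the
   binary-input channel between its two extreme rows, and this binary capacity
   strictly increases when either end of the segment is pushed outwards (a
   quantitative Jensen gap).  Constant strategies u = [ffun => x] reproduce the
   rows of W'W'', so the extreme parameters of V enclose those of W'W''; the
   capacities are equal iff the extremes coincide, and since the extreme
   parameter of V averages the pointwise extremes of the K^(s), this happens iff
   for almost every state the minimum and maximum are attained at common
   inputs i1, i2. *)

Section KLTerm.
Variable R : realType.
Implicit Types a b c q s x y : R.

(* [KL P Q] unfolds to [\sum_y klterm (Q y) (P y)]. *)
Definition klterm q x : R := x * ln (x / q).

Lemma ln_lt_subr1 y : 0 < y -> y != 1 -> ln y < y - 1.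
Proof.
move=> y0 y1; rewrite -ltr_expR lnK ?posrE //.
have := @expR_gt1Dx R (y - 1); rewrite addrCA subrr addr0; apply.
by rewrite subr_eq0.
Qed.

Lemma ln_le_subr1 y : 0 < y -> ln y <= y - 1.
Proof.
move=> y0; have [->|y1] := eqVneq y 1; first by rewrite ln1 subrr.
exact/ltW/ln_lt_subr1.
Qed.

Lemma klterm_id s : klterm s s = 0.
Proof.
rewrite /klterm; have [->|s0] := eqVneq s 0; first by rewrite mul0r.
by rewrite divff // ln1 mulr0.
Qed.

Lemma klterm0 x : klterm 0 x = 0.
Proof. by rewrite /klterm invr0 mulr0 ln0 // mulr0. Qed.

Lemma klterm_gt_sub x s : 0 <= x -> 0 < s -> x != s -> x - s < klterm s x.
Proof.
move=> x0 s0 xs; have [->|xn0] := eqVneq x 0.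
  by rewrite /klterm mul0r sub0r oppr_lt0.
have xp : 0 < x by rewrite lt0r xn0.
have sx1 : s / x != 1.
  by apply: contra xs => /eqP sx; rewrite -[s](divfK xn0) sx mul1r.
have := ln_lt_subr1 (divr_gt0 s0 xp) sx1; rewrite -(ltr_pM2l xp).
have -> : x * (s / x - 1) = s - x by field.
rewrite /klterm -[x / s]invf_div lnV ?posrE ?divr_gt0 // mulrN; lra.
Qed.

Lemma klterm_ge_sub x s : 0 <= x -> 0 < s -> x - s <= klterm s x.
Proof.
move=> x0 s0; have [->|xs] := eqVneq x s; first by rewrite klterm_id subrr.
exact/ltW/klterm_gt_sub.
Qed.

Lemma klterm_shift q s x : 0 <= x -> 0 < s -> 0 < q ->
  klterm q x = klterm s x + x * ln (s / q).
Proof.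
move=> x0 s0 q0; rewrite /klterm; have [->|xn0] := eqVneq x 0.
  by rewrite !mul0r addr0.
have xp : 0 < x by rewrite lt0r xn0.
rewrite !ln_div ?posrE //; ring.
Qed.

(* The Jensen gap of [klterm q] does not depend on [q]. *)
Lemma klterm_convex_gap q a b c : 0 <= a -> 0 <= b -> 0 < q ->
  0 < c * a + (1 - c) * b ->
  c * klterm q a + (1 - c) * klterm q b - klterm q (c * a + (1 - c) * b) =
  c * klterm (c * a + (1 - c) * b) a + (1 - c) * klterm (c * a + (1 - c) * b) b.
Proof.
move=> a0 b0 q0 s0.
rewrite (klterm_shift a0 s0 q0) (klterm_shift b0 s0 q0).
rewrite (klterm_shift (ltW s0) s0 q0) klterm_id; ring.
Qed.

Lemma convex_comb_gt0 a b c : 0 <= a -> 0 <= b -> 0 < c < 1 -> a != b ->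
  0 < c * a + (1 - c) * b.
Proof.
move=> a0 b0 /andP[c0 c1] ab.
have [ap|bp] : 0 < a \/ 0 < b.
  case: (eqVneq a 0) ab => [-> ab|an0 _]; last by left; rewrite lt0r an0.
  by right; rewrite lt0r eq_sym ab.
all: nra.
Qed.

Lemma klterm_convex q a b c : 0 <= a -> 0 <= b -> 0 <= c <= 1 -> 0 <= q ->
  klterm q (c * a + (1 - c) * b) <= c * klterm q a + (1 - c) * klterm q b.
Proof.
move=> a0 b0 /andP[c0 c1] q0.
have [->|qn0] := eqVneq q 0; first by rewrite !klterm0 !mulr0 addr0.
have qp : 0 < q by rewrite lt0r qn0.
have ca0 : 0 <= c * a by rewrite mulr_ge0.
have cb0 : 0 <= (1 - c) * b by rewrite mulr_ge0 ?subr_ge0.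
set s := c * a + (1 - c) * b.
have [s0|sn0] := eqVneq s 0.
  move/eqP: s0; rewrite paddr_eq0 // => /andP[/eqP ca /eqP cb].
  by rewrite /klterm !mulrA ca cb /s ca cb addr0 !mul0r addr0.
have sp : 0 < s by rewrite lt0r sn0 addr_ge0.
rewrite -subr_ge0 klterm_convex_gap //.
have := klterm_ge_sub a0 sp; have := klterm_ge_sub b0 sp.
have : c * (a - s) + (1 - c) * (b - s) = 0 by rewrite /s; ring.
nra.
Qed.

Lemma klterm_strict_convex q a b c : 0 <= a -> 0 <= b -> 0 < c < 1 -> 0 < q ->
  a != b -> klterm q (c * a + (1 - c) * b) < c * klterm q a + (1 - c) * klterm q b.
Proof.
move=> a0 b0 c01 q0 ab; have sp := convex_comb_gt0 a0 b0 c01 ab.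
case/andP: c01 => c0 c1; rewrite -subr_gt0 klterm_convex_gap //.
set s := c * a + (1 - c) * b in sp *.
have a_s : a != s.
  rewrite eq_sym -subr_eq0 (_ : s - a = (1 - c) * (b - a)); last by rewrite /s; ring.
  by apply: mulf_neq0; [rewrite lt0r_neq0 // subr_gt0 | rewrite subr_eq0 eq_sym].
have := klterm_gt_sub a0 sp a_s.
have := klterm_ge_sub b0 sp.
have : c * (a - s) + (1 - c) * (b - s) = 0 by rewrite /s; ring.
nra.
Qed.

Lemma mul_klterm_le c q x : 0 <= x -> 0 <= c -> c * x <= q ->
  c * klterm q x <= x * - (c * ln c).
Proof.
move=> x0 c0 cxq; have [->|cn0] := eqVneq c 0; first by rewrite !mul0r oppr0 mulr0.
have [->|xn0] := eqVneq x 0; first by rewrite /klterm !mul0r mulr0.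
have cp : 0 < c by rewrite lt0r cn0.
have xp : 0 < x by rewrite lt0r xn0.
have qp : 0 < q by apply: lt_le_trans cxq; rewrite mulr_gt0.
rewrite /klterm mulrCA ler_pM2l // -mulrN ler_pM2l // -lnV ?posrE //.
rewrite ler_ln ?posrE ?divr_gt0 ?invr_gt0 // ler_pdivrMr // mulrC ler_pdivlMr //.
by rewrite mulrC.
Qed.

Definition entropy2 x : R := - (x * ln x) - (1 - x) * ln (1 - x).

Lemma neg_xlnx_le x : 0 <= x -> - (x * ln x) <= 1 - x.
Proof.
move=> x0; have [->|xn0] := eqVneq x 0; first by rewrite mul0r oppr0 addr0.
have xp : 0 < x by rewrite lt0r xn0.
have := ln_le_subr1 (y := x^-1); rewrite invr_gt0 => /(_ xp); rewrite lnV ?posrE // -(ler_pM2l xp).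
by rewrite mulrBr mulfV // mulr1 mulrN.
Qed.

Lemma neg_xlnx_le_sqrt x : 0 <= x -> - (x * ln x) <= 2 * Num.sqrt x.
Proof.
move=> x0; have [->|xn0] := eqVneq x 0; first by rewrite mul0r oppr0 sqrtr0 mulr0.
set s := Num.sqrt x; have sp : 0 < s by rewrite sqrtr_gt0 lt0r xn0.
rewrite -(sqr_sqrtr x0) -/s lnXn // mulr2n.
have := neg_xlnx_le (ltW sp); nra.
Qed.

Lemma entropy2_le_sqrt x : 0 <= x <= 1 -> entropy2 x <= 3 * Num.sqrt x.
Proof.
move=> /andP[x0 x1]; rewrite /entropy2.
have := neg_xlnx_le_sqrt x0; have := neg_xlnx_le (x := 1 - x); rewrite subr_ge0 => /(_ x1).
have s1 : Num.sqrt x <= 1 by rewrite -sqrtr1 ler_sqrt.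
have : x <= Num.sqrt x by rewrite -{1}(sqr_sqrtr x0); have := sqrtr_ge0 x; nra.
lra.
Qed.

End KLTerm.

Section BinaryInput.
Variables (R : realType) (B : finType).
Implicit Types (c l s t : R) (r : B -> R).

Definition mix c r1 r2 : B -> R := fun z => c * r1 z + (1 - c) * r2 z.

(* [mutinf2 l r1 r2] is the mutual information of the input law (l, 1 - l) on
   the binary-input channel with rows [r1], [r2]; [cap2] is its capacity. *)
Definition mutinf2 l r1 r2 : R :=
  \sum_z (l * klterm (mix l r1 r2 z) (r1 z) + (1 - l) * klterm (mix l r1 r2 z) (r2 z)).

Definition cap2 r1 r2 : R :=
  sup [set mutinf2 l r1 r2 | l in [set l : R | 0 <= l <= 1]].

Lemma mix_mix c s t r1 r2 :
  mix c (mix s r1 r2) (mix t r1 r2) = mix (c * s + (1 - c) * t) r1 r2.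
Proof. by apply/funext => z; rewrite /mix; ring. Qed.

Lemma mix_mixl l c r1 r2 : mix l (mix c r1 r2) r2 = mix (l * c) r1 r2.
Proof. by apply/funext => z; rewrite /mix; ring. Qed.

Lemma mix0 r1 r2 : mix 0 r1 r2 = r2.
Proof. by apply/funext => z; rewrite /mix mul0r subr0 mul1r add0r. Qed.

Lemma mix_neq s t r1 r2 z : s != t -> r1 z != r2 z -> mix s r1 r2 z != mix t r1 r2 z.
Proof.
move=> st r12; rewrite -subr_eq0.
have -> : mix s r1 r2 z - mix t r1 r2 z = (s - t) * (r1 z - r2 z) by rewrite /mix; ring.
by rewrite mulf_neq0 // subr_eq0.
Qed.

Lemma mix_dist c r1 r2 : is_dist r1 -> is_dist r2 -> 0 <= c <= 1 -> is_dist (mix c r1 r2).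
Proof.
move=> [p1 s1] [p2 s2] /andP[c0 c1]; split=> [z|].
  by rewrite /mix addr_ge0 // mulr_ge0 // subr_ge0.
by rewrite /mix big_split /= -!mulr_sumr s1 s2; ring.
Qed.

Section TwoDistributions.
Variables r1 r2 : B -> R.
Hypotheses (d1 : is_dist r1) (d2 : is_dist r2).

Lemma mutinf2_term_ge0 l z : 0 <= l <= 1 ->
  0 <= l * klterm (mix l r1 r2 z) (r1 z) + (1 - l) * klterm (mix l r1 r2 z) (r2 z).
Proof.
move=> l01; have [p1 _] := d1; have [p2 _] := d2; have [pm _] := mix_dist d1 d2 l01.
by have := klterm_convex (p1 z) (p2 z) l01 (pm z); rewrite -/(mix l r1 r2 z) klterm_id.
Qed.

Lemma mutinf2_ge0 l : 0 <= l <= 1 -> 0 <= mutinf2 l r1 r2.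
Proof. by move=> l01; apply: sumr_ge0 => z _; exact: mutinf2_term_ge0. Qed.

Lemma mutinf2_le_entropy l : 0 <= l <= 1 -> mutinf2 l r1 r2 <= entropy2 l.
Proof.
move=> /andP[l0 l1]; have [p1 s1] := d1; have [p2 s2] := d2.
have -> : entropy2 l = \sum_z (r1 z * - (l * ln l) + r2 z * - ((1 - l) * ln (1 - l))).
  by rewrite big_split /= -!mulr_suml s1 s2 !mul1r.
apply: ler_sum => z _; apply: lerD; apply: mul_klterm_le => //.
- by rewrite /mix lerDl mulr_ge0 ?subr_ge0.
- by rewrite subr_ge0.
- by rewrite /mix lerDr mulr_ge0.
Qed.

Lemma mutinf2_le_sqrt l : 0 <= l <= 1 -> mutinf2 l r1 r2 <= 3 * Num.sqrt l.
Proof. by move=> l01; apply: le_trans (mutinf2_le_entropy l01) (entropy2_le_sqrt l01). Qed.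

Lemma cap2_ub : has_ubound [set mutinf2 l r1 r2 | l in [set l : R | 0 <= l <= 1]].
Proof.
exists 3 => _ [l /andP[l0 l1] <-]; apply: le_trans (mutinf2_le_sqrt _) _.
  by rewrite l0.
by rewrite -[leRHS]mulr1 ler_wpM2l // -sqrtr1 ler_sqrt.
Qed.

Lemma mutinf2_le_cap2 l : 0 <= l <= 1 -> mutinf2 l r1 r2 <= cap2 r1 r2.
Proof. by move=> l01; apply: ub_le_sup cap2_ub _ _; exists l. Qed.

Lemma cap2_gt0 z0 : r1 z0 != r2 z0 -> 0 < cap2 r1 r2.
Proof.
move=> r12; have half01 : 0 < (2^-1 : R) < 1 by apply/andP; split; lra.
have half01' : 0 <= (2^-1 : R) <= 1 by apply/andP; split; lra.
apply: lt_le_trans (mutinf2_le_cap2 half01'); rewrite /mutinf2 (bigD1 z0) //=.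
apply: ltr_pwDl; last by apply: sumr_ge0 => z _; exact: mutinf2_term_ge0.
have [p1 _] := d1; have [p2 _] := d2.
rewrite -(klterm_id (mix 2^-1 r1 r2 z0)) {1}/mix.
exact: klterm_strict_convex (convex_comb_gt0 _ _ half01 r12) r12.
Qed.

End TwoDistributions.

Lemma cap2_le r1 r2 x : (forall l, 0 <= l <= 1 -> mutinf2 l r1 r2 <= x) -> cap2 r1 r2 <= x.
Proof.
move=> H; apply: ge_sup => [|_ [l l01 <-]]; last exact: H.
by exists (mutinf2 0 r1 r2), 0 => //=; rewrite lexx ler01.
Qed.

Lemma mutinf2_sym l r1 r2 : mutinf2 l r1 r2 = mutinf2 (1 - l) r2 r1.
Proof.
apply: eq_bigr => z _; have -> : mix (1 - l) r2 r1 z = mix l r1 r2 z by rewrite /mix; ring.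
by rewrite subKr addrC.
Qed.

Lemma cap2_sym r1 r2 : cap2 r1 r2 = cap2 r2 r1.
Proof.
have flip l : 0 <= l <= 1 -> 0 <= 1 - l <= 1 by move=> /andP[l0 l1]; apply/andP; split; lra.
rewrite /cap2; congr sup; apply/seteqP; split=> _ [l l01 <-].
  by exists (1 - l); [exact: flip | rewrite -mutinf2_sym].
by exists (1 - l); [exact: flip | rewrite mutinf2_sym subKr].
Qed.

Lemma cap2_id r : cap2 r r = 0.
Proof.
have J0 l : mutinf2 l r r = 0.
  rewrite /mutinf2 big1 // => z _; have -> : mix l r r z = r z by rewrite /mix; ring.
  by rewrite klterm_id !mulr0 addr0.
apply/le_anti/andP; split; first by apply: cap2_le => l _; rewrite J0.
rewrite /cap2; apply: ub_le_sup; first by exists 0 => _ [l _ <-]; rewrite J0.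
by exists 0; rewrite /= ?lexx ?ler01 ?J0.
Qed.

Section MixStrict.
Variables (r1 r2 : B -> R) (c : R) (z0 : B).
Hypotheses (d1 : is_dist r1) (d2 : is_dist r2) (r12 : r1 z0 != r2 z0) (c01 : 0 < c < 1).

Let w := mix c r1 r2.
Let gap := c * klterm (w z0) (r1 z0) + (1 - c) * klterm (w z0) (r2 z0).

Let gap_gt0 : 0 < gap.
Proof.
have [p1 _] := d1; have [p2 _] := d2.
have := klterm_strict_convex (p1 z0) (p2 z0) c01 (convex_comb_gt0 (p1 z0) (p2 z0) c01 r12) r12.
by rewrite -/(mix c r1 r2 z0) -/w klterm_id.
Qed.

(* Both input laws induce the output law [mix (l * c) r1 r2], and the difference
   of the two sums is [l] times a sum of Jensen gaps of [klterm], the one at [z0]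
   being [gap] by [klterm_convex_gap]. *)
Lemma mutinf2_mix_gap l : 0 < l <= 1 -> mutinf2 l w r2 + l * gap <= mutinf2 (l * c) r1 r2.
Proof.
move=> /andP[l0 l1]; have [p1 _] := d1; have [p2 _] := d2; have /andP[c0 c1] := c01.
have lc01 : 0 < l * c < 1 by apply/andP; split; nra.
have [pQ _] : is_dist (mix (l * c) r1 r2) by apply: mix_dist; rewrite // !ltW //; nra.
rewrite addrC -lerBrDr /mutinf2 mix_mixl -sumrB.
set Q := mix (l * c) r1 r2 in pQ *.
under eq_bigr => z _.
  rewrite (_ : _ - _ = l * (c * klterm (Q z) (r1 z) + (1 - c) * klterm (Q z) (r2 z)
                            - klterm (Q z) (w z))); last by ring.
  over.
rewrite (bigD1 z0) //= -[leLHS]addr0; apply: lerD.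
  have Qz0 : 0 < Q z0 by apply: convex_comb_gt0.
  by rewrite /w /mix klterm_convex_gap ?convex_comb_gt0.
apply: sumr_ge0 => z _; apply: mulr_ge0; first exact: ltW.
by rewrite subr_ge0 /w /mix; apply: klterm_convex; rewrite // !ltW.
Qed.

(* The supremum defining [cap2 w r2] need not be attained, so split [0, 1] at
   [u ^+ 2]: below, the entropy bound [3 * sqrt l] is small; above,
   [mutinf2_mix_gap] loses at least [u ^+ 2 * gap]. *)
Lemma cap2_mix_interior_lt : cap2 w r2 < cap2 r1 r2.
Proof.
have /andP[c0 c1] := c01.
have c01' : 0 <= c <= 1 by rewrite !ltW.
have dw : is_dist w by apply: mix_dist.
have one01 : 0 <= (1 : R) <= 1 by rewrite ler01 /=.
have one01' : 0 < (1 : R) <= 1 by rewrite ltr01 /=.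
have gap_le : gap <= cap2 r1 r2.
  have := mutinf2_mix_gap one01'; rewrite !mul1r.
  have := mutinf2_ge0 dw d2 one01; have := mutinf2_le_cap2 d1 d2 c01'.
  lra.
set u := Num.min 1 (gap / 4).
have u0 : 0 < u by rewrite lt_min ltr01 divr_gt0.
have u1 : u <= 1 by rewrite ge_min lexx.
have u_gap : u <= gap / 4 by rewrite ge_min lexx orbT.
have u2 : u ^+ 2 <= 1 by rewrite expr2; apply: mulr_ile1; rewrite // ltW.
have small l : 0 <= l <= u ^+ 2 -> mutinf2 l w r2 <= 3 * u.
  move=> /andP[l0 lu]; have l01 : 0 <= l <= 1 by rewrite l0 (le_trans lu u2).
  apply: le_trans (mutinf2_le_sqrt dw d2 l01) _.
  by rewrite ler_wpM2l // -(ger0_norm (ltW u0)) -sqrtr_sqr ler_sqrt // sqr_ge0.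
have large l : u ^+ 2 < l <= 1 -> mutinf2 l w r2 <= cap2 r1 r2 - u ^+ 2 * gap.
  move=> /andP[lu l1]; have l0 : 0 < l := le_lt_trans (sqr_ge0 u) lu.
  have := @mutinf2_mix_gap l; rewrite l0 l1 => /(_ isT).
  have : u ^+ 2 * gap <= l * gap by rewrite ler_pM2r // ltW.
  have : mutinf2 (l * c) r1 r2 <= cap2 r1 r2.
    by apply: (mutinf2_le_cap2 d1 d2); apply/andP; split; nra.
  lra.
apply: (@le_lt_trans _ _ (Num.max (3 * u) (cap2 r1 r2 - u ^+ 2 * gap))).
  apply: cap2_le => l /andP[l0 l1]; rewrite le_max.
  by case: (leP l (u ^+ 2)) => lu; [rewrite small ?l0 | rewrite large ?lu ?orbT].
have pos : 0 < u ^+ 2 * gap by rewrite mulr_gt0 ?exprn_gt0.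
by rewrite gt_max; apply/andP; split; lra.
Qed.

End MixStrict.

Lemma cap2_mix_lt r1 r2 c z0 : is_dist r1 -> is_dist r2 -> r1 z0 != r2 z0 ->
  0 <= c < 1 -> cap2 (mix c r1 r2) r2 < cap2 r1 r2.
Proof.
move=> d1 d2 r12 /andP[c0 c1]; have [->|cn0] := eqVneq c 0.
  by rewrite mix0 cap2_id; exact: cap2_gt0 r12.
by apply: (cap2_mix_interior_lt d1 d2 r12); rewrite lt0r cn0 c0.
Qed.

End BinaryInput.

Section WeightedSums.
Variables (R : realType) (I : finType).
Implicit Types (p f g : I -> R).

Lemma wsum_affine p f x y : is_dist p ->
  \sum_i p i * (f i * x + (1 - f i) * y) =
  (\sum_i p i * f i) * x + (1 - \sum_i p i * f i) * y.
Proof.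
move=> [_ p1].
rewrite (eq_bigr (fun i => p i * f i * (x - y) + p i * y)); last by move=> i _; ring.
by rewrite big_split /= -!mulr_suml p1; ring.
Qed.

Lemma wsum_ge0_le1 p f : is_dist p -> (forall i, 0 <= f i <= 1) ->
  0 <= \sum_i p i * f i <= 1.
Proof.
move=> [p0 p1] f01; apply/andP; split.
  by apply: sumr_ge0 => i _; rewrite mulr_ge0 //; case/andP: (f01 i).
by rewrite -p1; apply: ler_sum => i _; rewrite ler_piMr //; case/andP: (f01 i).
Qed.

Lemma ler_wsum p f g : (forall i, 0 <= p i) -> (forall i, 0 < p i -> f i <= g i) ->
  \sum_i p i * f i <= \sum_i p i * g i.
Proof.
move=> p0 fg; apply: ler_sum => i _; have [->|pn0] := eqVneq (p i) 0.
  by rewrite !mul0r.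
by rewrite ler_pM2l ?fg // lt0r pn0 p0.
Qed.

Lemma wsum_le_eq p f g : (forall i, 0 <= p i) -> (forall i, f i <= g i) ->
  \sum_i p i * f i = \sum_i p i * g i -> forall i, 0 < p i -> f i = g i.
Proof.
move=> p0 fg e i pi.
have h0 j : 0 <= p j * (g j - f j) by rewrite mulr_ge0 ?subr_ge0.
have : \sum_j p j * (g j - f j) = 0.
  by under eq_bigr do rewrite mulrBr; rewrite sumrB e subrr.
move/(psumr_eq0P (fun j _ => h0 j))/(_ i isT)/eqP.
by rewrite mulf_eq0 (negbTE (lt0r_neq0 pi)) subr_eq0 => /eqP.
Qed.

End WeightedSums.

Section MixtureRows.
Variables (R : realType) (A B : finType).

Definition mu2 (j1 j2 : A) (l : R) : A -> R :=
  fun i => l * (i == j1)%:R + (1 - l) * (i == j2)%:R.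

Lemma sum_mu2 j1 j2 l (F : A -> R) :
  \sum_i mu2 j1 j2 l i * F i = l * F j1 + (1 - l) * F j2.
Proof.
have pick j : \sum_i (i == j)%:R * F i = F j.
  by rewrite (bigD1 j) //= eqxx mul1r big1 ?addr0 // => i /negbTE ->; rewrite mul0r.
rewrite (eq_bigr (fun i => l * ((i == j1)%:R * F i) + (1 - l) * ((i == j2)%:R * F i))).
  by rewrite big_split /= -!mulr_sumr !pick.
by move=> i _; rewrite /mu2; ring.
Qed.

Lemma mu2_dist j1 j2 l : 0 <= l <= 1 -> is_dist (mu2 j1 j2 l).
Proof.
move=> /andP[l0 l1]; split=> [i|].
  by rewrite /mu2 addr_ge0 // mulr_ge0 ?subr_ge0 ?ler0n.
by have := sum_mu2 j1 j2 l (fun _ => 1); rewrite !mulr1 subrKC; under eq_bigr do rewrite mulr1.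
Qed.

Lemma mutinf_mu2 (W : A -> B -> R) j1 j2 l :
  mutinf (mu2 j1 j2 l) W = mutinf2 l (W j1) (W j2).
Proof.
rewrite /mutinf; have -> : out_dist (mu2 j1 j2 l) W = mix l (W j1) (W j2).
  by apply/funext => z; rewrite /out_dist sum_mu2.
by rewrite sum_mu2 /mutinf2 big_split /= -!mulr_sumr.
Qed.

Lemma mutinf_mix_rows_le (mu al : A -> R) (r1 r2 : B -> R) :
  is_dist mu -> is_dist r1 -> is_dist r2 -> (forall i, 0 <= al i <= 1) ->
  mutinf mu (fun i => mix (al i) r1 r2) <= mutinf2 (\sum_i mu i * al i) r1 r2.
Proof.
move=> dmu d1 d2 al01; have [p0 _] := dmu; have [p1 _] := d1; have [p2 _] := d2.
set l := \sum_i mu i * al i.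
have [pQ _] := mix_dist d1 d2 (wsum_ge0_le1 dmu al01).
rewrite /mutinf; have -> : out_dist mu (fun i => mix (al i) r1 r2) = mix l r1 r2.
  by apply/funext => z; rewrite /out_dist /mix wsum_affine.
apply: (@le_trans _ _ (\sum_i mu i * \sum_z (al i * klterm (mix l r1 r2 z) (r1 z)
                                   + (1 - al i) * klterm (mix l r1 r2 z) (r2 z)))).
  apply: ler_sum => i _; apply: ler_wpM2l => //; apply: ler_sum => z _.
  exact: klterm_convex.
under eq_bigr do rewrite mulr_sumr.
by rewrite exchange_big /=; apply: ler_sum => z _; rewrite wsum_affine.
Qed.

End MixtureRows.

Lemma convex_coord (R : realFieldType) (lo hi x : R) : lo <= x <= hi ->
  exists c, 0 <= c <= 1 /\ x = c * lo + (1 - c) * hi.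
Proof.
move=> /andP[lx xh]; have [e|ne] := eqVneq lo hi.
  exists 0; rewrite lexx ler01 mul0r subr0 mul1r add0r; split=> //.
  by apply/le_anti; rewrite xh -e lx.
have hp : 0 < hi - lo by rewrite subr_gt0 lt_neqAle ne (le_trans lx xh).
exists ((hi - x) / (hi - lo)); split; last by field; rewrite lt0r_neq0.
apply/andP; split; first by apply: divr_ge0; [rewrite subr_ge0 | exact: ltW].
by rewrite ler_pdivrMr // mul1r lerD2l lerN2.
Qed.

Section SegmentChannel.
Variables (R : realType) (A B : finType) (a b : B -> R).
Hypotheses (da : is_dist a) (db : is_dist b).

Definition seg_chan (t : A -> R) : A -> B -> R := fun i => mix (t i) a b.

Lemma mutinf_seg_chan_le (t : A -> R) lo hi mu : 0 <= lo -> lo <= hi -> hi <= 1 ->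
  (forall i, lo <= t i <= hi) -> is_dist mu ->
  exists2 l, 0 <= l <= 1 & mutinf mu (seg_chan t) <= mutinf2 l (mix lo a b) (mix hi a b).
Proof.
move=> lo0 lohi hi1 ht dmu.
have lo01 : 0 <= lo <= 1 by apply/andP; split; lra.
have hi01 : 0 <= hi <= 1 by apply/andP; split; lra.
have /choice[al hal] : forall i, exists c, 0 <= c <= 1 /\ t i = c * lo + (1 - c) * hi.
  by move=> i; exact: convex_coord.
have al01 i : 0 <= al i <= 1 := (hal i).1.
have -> : seg_chan t = fun i => mix (al i) (mix lo a b) (mix hi a b).
  by apply/funext => i; rewrite mix_mix -(hal i).2.
exists (\sum_i mu i * al i); first exact: wsum_ge0_le1.
by apply: mutinf_mix_rows_le => //; apply: mix_dist.
Qed.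

Lemma capacity_seg_chan (t : A -> R) i1 i2 : 0 <= t i1 -> t i2 <= 1 ->
  (forall i, t i1 <= t i <= t i2) ->
  capacity (seg_chan t) = cap2 (mix (t i1) a b) (mix (t i2) a b).
Proof.
move=> lo0 hi1 ext; have /andP[_ lohi] := ext i1.
have d1 : is_dist (mix (t i1) a b) by apply: mix_dist; rewrite // lo0 (le_trans lohi).
have d2 : is_dist (mix (t i2) a b) by apply: mix_dist; rewrite // hi1 (le_trans lo0).
set G := cap2 (mix (t i1) a b) (mix (t i2) a b).
have le_cap2 mu : is_dist mu -> mutinf mu (seg_chan t) <= G.
  move=> dmu; have [l l01 le] := mutinf_seg_chan_le lo0 lohi hi1 ext dmu.
  exact: le_trans le (mutinf2_le_cap2 d1 d2 l01).
apply/le_anti/andP; split.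
  apply: ge_sup => [|_ [mu dmu <-]]; last exact: le_cap2.
  exists (mutinf (mu2 i1 i1 1) (seg_chan t)), (mu2 i1 i1 1) => //=.
  by apply: mu2_dist; rewrite ler01 /=.
apply: cap2_le => l l01; rewrite -(mutinf_mu2 (seg_chan t)).
apply: ub_le_sup; first by exists G => _ [mu dmu <-]; exact: le_cap2.
by exists (mu2 i1 i2 l) => //=; exact: mu2_dist.
Qed.

Variable z0 : B.
Hypothesis ab : a z0 != b z0.

Lemma cap2_seg_lt s t c : 0 <= s <= 1 -> 0 <= t <= 1 -> s != t -> 0 <= c < 1 ->
  cap2 (mix (c * s + (1 - c) * t) a b) (mix t a b) < cap2 (mix s a b) (mix t a b).
Proof.
move=> s01 t01 st c01; rewrite -mix_mix.
exact: cap2_mix_lt (mix_dist da db s01) (mix_dist da db t01) (mix_neq st ab) c01.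
Qed.

Lemma cap2_seg_lt_lo lo' lo hi : 0 <= lo' -> lo' < lo -> lo <= hi -> hi <= 1 ->
  cap2 (mix lo a b) (mix hi a b) < cap2 (mix lo' a b) (mix hi a b).
Proof.
move=> lo'0 lo'lo lohi hi1; have hp : 0 < hi - lo' by rewrite subr_gt0 (lt_le_trans lo'lo).
have -> : lo = (hi - lo) / (hi - lo') * lo' + (1 - (hi - lo) / (hi - lo')) * hi.
  by field; rewrite lt0r_neq0.
apply: cap2_seg_lt; rewrite ?lo'0 ?hi1 ?(lt_eqF (lt_le_trans lo'lo lohi)) //=.
1,2: lra.
apply/andP; split; first by apply: divr_ge0; lra.
by rewrite ltr_pdivrMr // mul1r; lra.
Qed.

Lemma cap2_seg_lt_hi lo hi hi' : 0 <= lo -> lo <= hi -> hi < hi' -> hi' <= 1 ->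
  cap2 (mix lo a b) (mix hi a b) < cap2 (mix lo a b) (mix hi' a b).
Proof.
move=> lo0 lohi hihi' hi'1; have hp : 0 < hi' - lo by rewrite subr_gt0 (le_lt_trans lohi).
rewrite !(cap2_sym (mix lo a b)).
have -> : hi = (hi - lo) / (hi' - lo) * hi' + (1 - (hi - lo) / (hi' - lo)) * lo.
  by field; rewrite lt0r_neq0.
apply: cap2_seg_lt; rewrite ?lo0 ?hi'1 ?(gt_eqF (le_lt_trans lohi hihi')) //=.
1,2: lra.
apply/andP; split; first by apply: divr_ge0; lra.
by rewrite ltr_pdivrMr // mul1r; lra.
Qed.

Lemma cap2_seg_widen_eq lo' lo hi hi' :
  0 <= lo' -> lo' <= lo -> lo <= hi -> hi <= hi' -> hi' <= 1 ->
  cap2 (mix lo' a b) (mix hi' a b) = cap2 (mix lo a b) (mix hi a b) -> lo' = lo /\ hi = hi'.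
Proof.
move=> lo'0 lo'lo lohi hihi' hi'1 e.
have le_hi : cap2 (mix lo' a b) (mix hi a b) <= cap2 (mix lo' a b) (mix hi' a b).
  have [-> //|ne] := eqVneq hi hi'.
  by apply/ltW/cap2_seg_lt_hi; rewrite ?lt_neqAle ?ne //; lra.
have elo : lo' = lo.
  apply/eqP; rewrite eq_le lo'lo /= leNgt; apply/negP => lt.
  by have := cap2_seg_lt_lo lo'0 lt lohi (le_trans hihi' hi'1); lra.
split=> //; subst lo'; apply/eqP; rewrite eq_le hihi' /= leNgt; apply/negP => lt.
by have := cap2_seg_lt_hi lo'0 lohi lt hi'1; lra.
Qed.

End SegmentChannel.

Section BinaryOutput.
Variable R : realType.

Lemma sum_ord2 (F : 'I_2 -> R) : \sum_y F y = F ord0 + F ord_max.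
Proof. by rewrite !big_ord_recl big_ord0 addr0; congr (_ + F _); exact: val_inj. Qed.

Lemma channel2_first01 (A : finType) (W : A -> 'I_2 -> R) x :
  is_channel W -> 0 <= W x ord0 <= 1.
Proof.
move=> /(_ x) [W0 W1]; rewrite sum_ord2 in W1.
by rewrite W0 /= -W1 lerDl.
Qed.

Lemma chan_comp_binary (A C : finType) (W1 : A -> 'I_2 -> R) (W2 : 'I_2 -> C -> R) :
  is_channel W1 -> chan_comp W1 W2 = seg_chan (W2 ord0) (W2 ord_max) (fun x => W1 x ord0).
Proof.
move=> hW; apply/funext => x; apply/funext => z.
have [_] := hW x; rewrite sum_ord2 => e.
rewrite /chan_comp sum_ord2 /seg_chan /mix.
by have -> : W1 x ord_max = 1 - W1 x ord0 by lra.
Qed.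

Lemma is_channel_state_avg (S A B : finType) (pS : S -> R) (K : S -> A -> B -> R) :
  is_dist pS -> (forall s, is_channel (K s)) ->
  is_channel (fun (u : {ffun S -> A}) y => \sum_s pS s * K s (u s) y).
Proof.
move=> [p0 p1] hK u; split=> [y|].
  by apply: sumr_ge0 => s _; rewrite mulr_ge0 //; case: (hK s (u s)).
rewrite exchange_big /= -p1; apply: eq_bigr => s _; rewrite -mulr_sumr.
by case: (hK s (u s)) => _ ->; rewrite mulr1.
Qed.

End BinaryOutput.

Section CausalStateInformation.
Variables (R : realType) (B S A : finType) (x0 : A).
Variables (pS : S -> R) (k : S -> A -> R) (a b : B -> R) (z0 : B).
Hypotheses (pS_dist : is_dist pS) (k01 : forall s x, 0 <= k s x <= 1).
Hypotheses (da : is_dist a) (db : is_dist b) (ab : a z0 != b z0).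

Definition kavg (u : {ffun S -> A}) : R := \sum_s pS s * k s (u s).

Lemma kavg_const x : kavg [ffun => x] = \sum_s pS s * k s x.
Proof. by apply: eq_bigr => s _; rewrite ffunE. Qed.

Let kavg01 u : 0 <= kavg u <= 1.
Proof. exact: wsum_ge0_le1. Qed.

Let ler_kavg (u u' : {ffun S -> A}) :
  (forall s, 0 < pS s -> k s (u s) <= k s (u' s)) -> kavg u <= kavg u'.
Proof. by apply: ler_wsum; case: pS_dist. Qed.

Let seg_const := seg_chan a b (fun x => kavg [ffun => x]).

Lemma capacity_causal_eq_of_ended i1 i2 :
  (forall s, 0 < pS s -> (forall i, k s i1 <= k s i) /\ (forall i, k s i <= k s i2)) ->
  capacity (seg_chan a b kavg) = capacity seg_const.
Proof.
move=> ended.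
have ext u : kavg [ffun => i1] <= kavg u <= kavg [ffun => i2].
  by apply/andP; split; apply: ler_kavg => s ps; rewrite !ffunE; case: (ended s ps).
have /andP[lo0 _] := kavg01 [ffun => i1]; have /andP[_ hi1] := kavg01 [ffun => i2].
rewrite (capacity_seg_chan da db lo0 hi1 ext).
by rewrite (capacity_seg_chan da db (t := fun x => kavg [ffun => x]) (i1 := i1) (i2 := i2)
  lo0 hi1 (fun x => ext [ffun => x])).
Qed.

Lemma ended_of_capacity_causal_eq :
  capacity (seg_chan a b kavg) = capacity seg_const ->
  exists i1 i2, forall s, 0 < pS s ->
    (forall i, k s i1 <= k s i) /\ (forall i, k s i <= k s i2).
Proof.
pose tW x := kavg [ffun => x].
have [xlo _ tW_lo] := @arg_minP _ R A x0 predT tW isT.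
have [xhi _ tW_hi] := @arg_maxP _ R A x0 predT tW isT.
pose umin := [ffun s => Order.arg_min x0 predT (k s)].
pose umax := [ffun s => Order.arg_max x0 predT (k s)].
have umin_le s i : k s (umin s) <= k s i by rewrite ffunE; case: arg_minP => // j _; apply.
have umax_ge s i : k s i <= k s (umax s) by rewrite ffunE; case: arg_maxP => // j _; apply.
have extV u : kavg umin <= kavg u <= kavg umax by apply/andP; split; apply: ler_kavg.
have extW x : tW xlo <= tW x <= tW xhi by apply/andP; split; [exact: tW_lo | exact: tW_hi].
have /andP[lo0 _] := kavg01 umin; have /andP[_ hi1] := kavg01 umax.
have /andP[lo0' _] := kavg01 [ffun => xlo]; have /andP[_ hi1'] := kavg01 [ffun => xhi].
rewrite (capacity_seg_chan da db lo0 hi1 extV).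
rewrite (capacity_seg_chan da db (t := tW) (i1 := xlo) (i2 := xhi) lo0' hi1' extW).
have /andP[lo_le _] := extV [ffun => xlo]; have /andP[_ hi_le] := extV [ffun => xhi].
have /andP[_ lohi] := extW xlo.
move=> /(cap2_seg_widen_eq da db ab lo0 lo_le lohi hi_le hi1) [elo ehi].
have p0 : forall s, 0 <= pS s by case: pS_dist.
exists xlo, xhi => s ps; split => i.
  have e : \sum_s pS s * k s (umin s) = \sum_s pS s * k s xlo by rewrite -kavg_const.
  by rewrite -(wsum_le_eq p0 (fun s => umin_le s xlo) e ps).
have e : \sum_s pS s * k s xhi = \sum_s pS s * k s (umax s) by rewrite -kavg_const.
by rewrite (wsum_le_eq p0 (fun s => umax_ge s xhi) e ps).
Qed.

End CausalStateInformation.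

Theorem theorem5 (R : realType) (m n : nat) (hm : (1 < m)%N) (hn : (1 < n)%N)
  (W' : 'I_m -> 'I_2 -> R) (W'' : 'I_2 -> 'I_n -> R)
  (hW' : is_channel W') (hW'' : is_channel W'')
  (hrows : exists z, W'' ord0 z <> W'' ord_max z)
  (S : finType) (pS : S -> R) (hpS : is_dist pS)
  (K : S -> 'I_m -> 'I_2 -> R) (hK : forall s, is_channel (K s))
  (hmix : forall x y, W' x y = \sum_(s : S) pS s * K s x y) :
  let V : {ffun S -> 'I_m} -> 'I_n -> R :=
    fun u z => \sum_(y : 'I_2) (\sum_(s : S) pS s * K s (u s) y) * W'' y z in
  capacity V = capacity (chan_comp W' W'') <->
  exists i1 i2 : 'I_m, forall s, 0 < pS s -> ended (K s) i1 i2.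
Proof.
move=> V; have x0 : 'I_m := Ordinal (ltnW hm).
have [z0 /eqP ab] := hrows.
pose k s x := K s x ord0.
have k01 s x : 0 <= k s x <= 1 := channel2_first01 x (hK s).
have -> : V = seg_chan (W'' ord0) (W'' ord_max) (kavg pS k) :=
  chan_comp_binary W'' (is_channel_state_avg hpS hK).
have -> : chan_comp W' W'' = seg_chan (W'' ord0) (W'' ord_max) (fun x => kavg pS k [ffun => x]).
  rewrite chan_comp_binary //; congr seg_chan; apply/funext => x.
  by rewrite kavg_const hmix.
have [da db] := (hW'' ord0, hW'' ord_max).
split; first exact: (ended_of_capacity_causal_eq x0 hpS k01 da db ab).
by case=> i1 [i2]; exact: (capacity_causal_eq_of_ended hpS k01 da db).
Qed.
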